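(* Let $\mathrm{SNR}>0$, $C=\frac12\log(1+\mathrm{SNR})$, $R_{\mathrm{crit}}<R<C$, and $\theta=\theta(R)$. Define $$\beta^*=\frac{\cos^2\theta}{2}+\frac{\cos^2\theta}{2}\sqrt{1+\frac{4}{\mathrm{SNR}\cos^2\theta}}-1,\qquad r(\beta)=(1+\beta)\tan\theta.$$ Then $$\frac{\mathrm{SNR}\,(\beta^* )^2}{2}+E_h\big(r(\beta^* )^2\,\mathrm{SNR}\big)=E_{\mathrm{sp}}(R;\mathrm{SNR}).$$
   Context: Logarithms are natural. $\theta(R)\in(0,\pi/2]$ is defined by $\sin\theta(R)=e^{-R}$. $E_h(\mu)=\frac12(\mu-1-\log\mu)$ if $\mu\ge1$ and $E_h(\mu)=0$ otherwise. $R_{\mathrm{crit}}=\frac12\log\Big(\frac12+\frac{\mathrm{SNR}}4+\frac12\sqrt{1+\frac{\mathrm{SNR}^2}{4}}\Big)$. $E_{\mathrm{sp}}(R;\mathrm{SNR})=E_G(\beta_G,\rho_G)$ with $E_G(\beta,\rho)=\frac12\big[(1-\beta)(1+\rho)+\mathrm{SNR}+\rho\log\beta+\log(\beta-\frac{\mathrm{SNR}}{1+\rho})-2\rho R\big]$, $\beta_G=e^{2R}$, $\rho_G=\frac{\mathrm{SNR}}{2\beta_G}\Big(1+\sqrt{1+\frac{4\beta_G}{\mathrm{SNR}(\beta_G-1)}}\Big)-1$. *)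

From Stdlib Require Import Reals Lra.
Open Scope R_scope.

Definition E_h (mu : R) : R :=
  if Rle_dec 1 mu then / 2 * (mu - 1 - ln mu) else 0.

Definition R_crit (SNR : R) : R :=
  / 2 * ln (/ 2 + SNR / 4 + / 2 * sqrt (1 + SNR ^ 2 / 4)).

Definition E_G (SNR Rt beta rho : R) : R :=
  / 2 * ((1 - beta) * (1 + rho) + SNR + rho * ln beta
         + ln (beta - SNR / (1 + rho)) - 2 * rho * Rt).

Definition beta_G (Rt : R) : R := exp (2 * Rt).

Definition rho_G (SNR Rt : R) : R :=
  SNR / (2 * beta_G Rt) *
    (1 + sqrt (1 + 4 * beta_G Rt / (SNR * (beta_G Rt - 1)))) - 1.

Definition E_sp (Rt SNR : R) : R := E_G SNR Rt (beta_G Rt) (rho_G SNR Rt).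

Definition capacity (SNR : R) : R := / 2 * ln (1 + SNR).

Definition beta_star (SNR theta : R) : R :=
  (cos theta) ^ 2 / 2
  + (cos theta) ^ 2 / 2 * sqrt (1 + 4 / (SNR * (cos theta) ^ 2)) - 1.

Definition r_fun (theta beta : R) : R := (1 + beta) * tan theta.

From Stdlib Require Import Reals Lra.
Open Scope R_scope.

(* Write c2 = cos^2 theta and Q = sqrt (1 + 4 / (SNR c2)), so that
   SNR c2 (Q^2 - 1) = 4.  Since sin theta = exp (-R), Gallager's parameter
   beta_G = exp (2R) equals 1 / (1 - c2), and the square root occurring in
   rho_G is the same Q.  Hence every quantity of the statement is a rational
   function of (SNR, c2, Q):
     beta_star = c2 (1 + Q) / 2 - 1,   rho_G = SNR (1 - c2) (1 + Q) / 2 - 1,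
     mu := r(beta_star)^2 SNR = (1 - c2) (1 + Q) / (Q - 1).
   In these coordinates beta_G - SNR / (1 + rho_G) = 1 / mu, which turns the
   logarithmic terms of E_sp into - ln mu (the rho ln beta term cancels
   against 2 rho R), and the remaining polynomial parts agree by the
   "energy balance" identity SNR beta_star^2 + mu - 1 = (1 - beta)(1 + rho) + SNR.
   Finally R < C gives beta_G < 1 + SNR, which is exactly mu >= 1, so E_h is
   on its non-trivial branch; R > R_crit is only used through R_crit > 0.
   The file first reduces E_h and E_G, then proves the identities in the
   (SNR, c2, Q) coordinates, then links them to theta, R and SNR. *)

Lemma E_h_ge_1 (mu : R) : 1 <= mu -> E_h mu = / 2 * (mu - 1 - ln mu).
Proof. intro Hmu; unfold E_h; destruct (Rle_dec 1 mu); [reflexivity | lra]. Qed.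

Lemma E_G_at_tangent_point (SNR Rt beta rho mu : R) :
  ln beta = 2 * Rt -> beta - SNR / (1 + rho) = / mu -> 0 < mu ->
  E_G SNR Rt beta rho = / 2 * ((1 - beta) * (1 + rho) + SNR - ln mu).
Proof.
  intros Hln Hgap Hmu; unfold E_G.
  rewrite Hln, Hgap, ln_Rinv by exact Hmu; ring.
Qed.

Lemma R_crit_pos (SNR : R) : 0 < SNR -> 0 < R_crit SNR.
Proof.
  intro hSNR; unfold R_crit.
  assert (Hsq : 1 <= sqrt (1 + SNR ^ 2 / 4)).
  { rewrite <- sqrt_1 at 1; apply sqrt_le_1_alt; pose proof (pow2_ge_0 SNR); lra. }
  assert (0 < ln (/ 2 + SNR / 4 + / 2 * sqrt (1 + SNR ^ 2 / 4))).
  { rewrite <- ln_1; apply ln_increasing; lra. }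
  lra.
Qed.

Section TangentPointAlgebra.

(* c2 plays the role of cos^2 theta and Q that of sqrt (1 + 4 / (SNR c2)). *)
Variables SNR c2 Q : R.
Hypotheses (hSNR : 0 < SNR) (hc2 : 0 < c2 < 1) (hQ : 1 < Q).

(* Gallager's beta = exp (2R) = 1 / sin^2 theta. *)
Definition gal_beta : R := / (1 - c2).
(* Gallager's rho, written as in rho_G with the square root replaced by Q. *)
Definition gal_rho : R := SNR / (2 * gal_beta) * (1 + Q) - 1.
Definition shift : R := c2 * (1 + Q) / 2 - 1.
(* The argument r(beta_star)^2 SNR of E_h, in closed form. *)
Definition mu : R := (1 - c2) * (1 + Q) / (Q - 1).

Lemma mu_pos : 0 < mu.
Proof. unfold mu; apply Rdiv_lt_0_compat; nra. Qed.

Lemma gap_eq_inv_mu : gal_beta - SNR / (1 + gal_rho) = / mu.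
Proof.
  assert (0 < SNR * (1 - c2) * (1 + Q)) by (repeat apply Rmult_lt_0_compat; lra).
  unfold gal_rho, gal_beta, mu.
  field; repeat split; lra.
Qed.

Hypothesis hQSNR : SNR * c2 * (Q ^ 2 - 1) = 4.

Lemma energy_balance :
  SNR * shift ^ 2 + mu - 1 = (1 - gal_beta) * (1 + gal_rho) + SNR.
Proof.
  assert (HSNR : SNR = 4 / (c2 * (Q ^ 2 - 1))).
  { rewrite <- hQSNR; field; split; nra. }
  unfold shift, mu, gal_rho, gal_beta; rewrite HSNR.
  field; repeat split; nra.
Qed.

(* The capacity condition beta < 1 + SNR puts mu on the branch mu >= 1:
   both are equivalent to c2 Q < 2 - c2. *)
Lemma mu_ge_1 : gal_beta < 1 + SNR -> 1 <= mu.
Proof.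
  unfold gal_beta, mu; intro Hcap.
  assert (Hc2 : c2 < SNR * (1 - c2)).
  { apply (Rmult_lt_compat_r (1 - c2)) in Hcap; [|lra].
    rewrite Rinv_l in Hcap by lra; nra. }
  assert (HcQ : c2 * Q < 2 - c2).
  { assert (c2 * c2 * (Q ^ 2 - 1) < 4 * (1 - c2)) by nra.
    nra. }
  apply (Rmult_le_reg_r (Q - 1)); [lra|].
  unfold Rdiv; rewrite Rmult_assoc, Rinv_l by lra; nra.
Qed.

End TangentPointAlgebra.

Lemma sqrt_param_spec (SNR c2 : R) : 0 < SNR -> 0 < c2 ->
  let Q := sqrt (1 + 4 / (SNR * c2)) in
  1 < Q /\ SNR * c2 * (Q ^ 2 - 1) = 4.
Proof.
  intros hSNR hc2 Q.
  assert (Hpos : 0 < 4 / (SNR * c2)) by (apply Rdiv_lt_0_compat; nra).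
  split.
  - unfold Q; rewrite <- sqrt_1 at 1; apply sqrt_lt_1_alt; lra.
  - unfold Q; rewrite <- Rsqr_pow2, Rsqr_sqrt by lra; field; lra.
Qed.

Lemma beta_G_of_sin (Rt theta : R) : sin theta = exp (- Rt) ->
  beta_G Rt = gal_beta (cos theta ^ 2).
Proof.
  intro hsin; unfold beta_G, gal_beta.
  assert (Hs : 1 - cos theta ^ 2 = exp (- Rt) ^ 2).
  { rewrite <- hsin; pose proof (sin2_cos2 theta); unfold Rsqr in *; nra. }
  rewrite Hs, <- pow_inv, <- exp_Ropp, Ropp_involutive; simpl.
  rewrite Rmult_1_r, <- exp_plus; f_equal; ring.
Qed.

Lemma cos_sq_bounds (Rt theta : R) : 0 < Rt -> sin theta = exp (- Rt) ->
  0 < cos theta ^ 2 < 1.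
Proof.
  intros hRt hsin.
  assert (Hs0 : 0 < sin theta) by (rewrite hsin; apply exp_pos).
  assert (Hs1 : sin theta < 1).
  { rewrite hsin, <- exp_0; apply exp_increasing; lra. }
  pose proof (sin2_cos2 theta); unfold Rsqr in *; nra.
Qed.

Lemma beta_G_lt_capacity (SNR Rt : R) : 0 < SNR -> Rt < capacity SNR ->
  beta_G Rt < 1 + SNR.
Proof.
  intros hSNR hR; unfold beta_G, capacity in *.
  rewrite <- (exp_ln (1 + SNR)) by lra; apply exp_increasing; lra.
Qed.

Lemma rho_G_eq (SNR Rt c2 : R) : 0 < SNR -> 0 < c2 < 1 ->
  beta_G Rt = gal_beta c2 ->
  rho_G SNR Rt = gal_rho SNR c2 (sqrt (1 + 4 / (SNR * c2))).
Proof.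
  intros hSNR hc2 hbeta; unfold rho_G, gal_rho; rewrite hbeta.
  replace (4 * gal_beta c2 / (SNR * (gal_beta c2 - 1))) with (4 / (SNR * c2));
    [reflexivity|].
  unfold gal_beta; field; repeat split; nra.
Qed.

Lemma beta_star_eq (SNR theta : R) :
  beta_star SNR theta =
  shift (cos theta ^ 2) (sqrt (1 + 4 / (SNR * cos theta ^ 2))).
Proof. unfold beta_star, shift; field. Qed.

Lemma r_fun_sq_eq (SNR theta Q : R) : cos theta <> 0 -> 1 < Q ->
  SNR * cos theta ^ 2 * (Q ^ 2 - 1) = 4 ->
  r_fun theta (shift (cos theta ^ 2) Q) ^ 2 * SNR = mu (cos theta ^ 2) Q.
Proof.
  intros hc hQ hQSNR.
  assert (HSNR : SNR = 4 / (cos theta ^ 2 * (Q ^ 2 - 1))).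
  { rewrite <- hQSNR; field; split; [nra | exact hc]. }
  assert (Hs : sin theta ^ 2 = 1 - cos theta ^ 2).
  { pose proof (sin2_cos2 theta); unfold Rsqr in *; nra. }
  unfold r_fun, shift, mu, tan; rewrite HSNR, <- Hs.
  field; repeat split; auto; nra.
Qed.

Lemma tangent_point_identity (SNR Rt c2 Q : R) :
  0 < SNR -> 0 < c2 < 1 -> 1 < Q -> SNR * c2 * (Q ^ 2 - 1) = 4 ->
  ln (gal_beta c2) = 2 * Rt -> gal_beta c2 < 1 + SNR ->
  SNR * shift c2 Q ^ 2 / 2 + E_h (mu c2 Q)
  = E_G SNR Rt (gal_beta c2) (gal_rho SNR c2 Q).
Proof.
  intros hSNR hc2 hQ hQSNR hln hcap.
  rewrite (E_G_at_tangent_point SNR Rt _ _ (mu c2 Q)), E_h_ge_1.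
  - rewrite <- energy_balance by assumption; field.
  - apply (mu_ge_1 SNR); assumption.
  - exact hln.
  - apply gap_eq_inv_mu; assumption.
  - apply mu_pos; assumption.
Qed.

Theorem mainTheorem3 (SNR Rt theta : R)
  (hSNR : 0 < SNR)
  (hR1 : R_crit SNR < Rt) (hR2 : Rt < capacity SNR)
  (htheta : 0 < theta <= PI / 2) (hsin : sin theta = exp (- Rt)) :
  SNR * (beta_star SNR theta) ^ 2 / 2
    + E_h ((r_fun theta (beta_star SNR theta)) ^ 2 * SNR)
  = E_sp Rt SNR.
Proof.
  assert (hRt : 0 < Rt) by (pose proof (R_crit_pos SNR hSNR); lra).
  pose proof (cos_sq_bounds Rt theta hRt hsin) as hc2.
  assert (hc : cos theta <> 0) by (intro H0; rewrite H0 in hc2; simpl in hc2; lra).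
  pose proof (beta_G_of_sin Rt theta hsin) as hbeta.
  destruct (sqrt_param_spec SNR (cos theta ^ 2) hSNR (proj1 hc2)) as [hQ hQSNR].
  unfold E_sp; rewrite beta_star_eq, r_fun_sq_eq by assumption.
  rewrite (rho_G_eq SNR Rt (cos theta ^ 2)), hbeta by assumption.
  apply tangent_point_identity; try assumption.
  - rewrite <- hbeta; apply ln_exp.
  - rewrite <- hbeta; exact (beta_G_lt_capacity SNR Rt hSNR hR2).
Qed.
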